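(* (i) Every finite BL-algebra with $n$ elements, $2\leq n\leq 5$, which is not an MV-algebra is isomorphic to an ordinal product $\mathcal{L}_1\boxtimes\mathcal{L}_2$ of BL-algebras. (ii) Writing $\mathcal{BL}_n$ for the set of BL-algebras with $n$ elements and $\mathcal{MV}_n$ for the set of MV-algebras with $n$ elements (both up to isomorphism), one has $|\mathcal{BL}_2|=|\mathcal{MV}_2|=\pi(2)+1$, $|\mathcal{BL}_3|=|\mathcal{MV}_3|+|\mathcal{BL}_2|=\pi(3)+\pi(2)+2$, $|\mathcal{BL}_4|=|\mathcal{MV}_4|+|\mathcal{BL}_3|+|\mathcal{BL}_2|=\pi(4)+\pi(3)+2\pi(2)+4$, $|\mathcal{BL}_5|=|\mathcal{MV}_5|+|\mathcal{BL}_4|+|\mathcal{BL}_3|+|\mathcal{BL}_2|=\pi(5)+\pi(4)+2\pi(3)+4\pi(2)+8$.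
   Context: A residuated lattice is an algebra $(L,\wedge,\vee,\odot,\rightarrow,0,1)$ with $(L,\wedge,\vee,0,1)$ a bounded lattice, $(L,\odot,1)$ a commutative ordered monoid, and $z\leq x\rightarrow y$ iff $x\odot z\leq y$. A BL-algebra is a residuated lattice satisfying $(x\rightarrow y)\vee(y\rightarrow x)=1$ and $x\odot(x\rightarrow y)=x\wedge y$. An MV-algebra is (equivalently) a residuated lattice satisfying $(x\rightarrow y)\rightarrow y=(y\rightarrow x)\rightarrow x$; MV-algebras are exactly the BL-algebras with $x^{**}=x$, where $x^*=x\rightarrow 0$. Ordinal product: given residuated lattices $\mathcal{L}_1=(L_1,\wedge_1,\vee_1,\odot_1,\rightarrow_1,0_1,1_1)$ and $\mathcal{L}_2=(L_2,\wedge_2,\vee_2,\odot_2,\rightarrow_2,0_2,1_2)$ with $1_1=0_2$ and $(L_1\setminus\{1_1\})\cap(L_2\setminus\{0_2\})=\emptyset$, $\mathcal{L}_1\boxtimes\mathcal{L}_2$ has universe $L_1\cup L_2$, $0=0_1$, $1=1_2$; $x\leq y$ iff ($x,y\in L_1$, $x\leq_1 y$) or ($x,y\in L_2$, $x\leq_2 y$) or ($x\in L_1$, $y\in L_2$); meet and join are computed in $L_i$ when both arguments lie in $L_i$, and otherwise $x\wedge y=x$, $x\vee y=y$ for $x\in L_1,y\in L_2$; $x\rightarrow y=1$ if $x\leq y$, $x\rightarrow y=x\rightarrow_i y$ if $x\not\leq y$ and $x,y\in L_i$, and $x\rightarrow y=y$ if $x\not\leq y$, $x\in L_2$, $y\in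 L_1\setminus\{1_1\}$; $x\odot y=x\odot_i y$ if $x,y\in L_i$, and $x\odot y=x$ if $x\in L_1\setminus\{1_1\}$, $y\in L_2$ (and symmetrically). For an integer $n\geq 2$, $\pi(n)$ denotes the number of (unordered) decompositions of $n$ as a product of at least two factors each greater than $1$ (so $\pi(n)=0$ for $n$ prime). *)

From mathcomp Require Import all_boot fingroup perm.
Set Implicit Arguments. Unset Strict Implicit. Unset Printing Implicit Defensive.

Record RLops (T : Type) := RLOps {
  rmeet : T -> T -> T; rjoin : T -> T -> T;
  rmul : T -> T -> T; rimp : T -> T -> T;
  rzero : T; rone : T }.

Section RLDefs.
Variables (T : finType) (A : RLops T).
Local Notation "x ∧ y" := (rmeet A x y) (at level 40).
Local Notation "x ∨ y" := (rjoin A x y) (at level 40).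
Local Notation "x ⊙ y" := (rmul A x y) (at level 40).
Local Notation "x → y" := (rimp A x y) (at level 40).

Definition rle (x y : T) : bool := x ∧ y == x.

Definition bounded_lattice_ax : bool :=
  [&& [forall x, forall y, x ∧ y == y ∧ x],
      [forall x, forall y, x ∨ y == y ∨ x],
      [forall x, forall y, forall z, x ∧ (y ∧ z) == (x ∧ y) ∧ z],
      [forall x, forall y, forall z, x ∨ (y ∨ z) == (x ∨ y) ∨ z],
      [forall x, forall y, x ∧ (x ∨ y) == x],
      [forall x, forall y, x ∨ (x ∧ y) == x] &
      [forall x, rle (rzero A) x && rle x (rone A)]].

Definition comm_ordered_monoid_ax : bool :=
  [&& [forall x, forall y, x ⊙ y == y ⊙ x],
      [forall x, forall y, forall z, x ⊙ (y ⊙ z) == (x ⊙ y) ⊙ z],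
      [forall x, x ⊙ rone A == x] &
      [forall x, forall y, forall z, rle x y ==> rle (x ⊙ z) (y ⊙ z)]].

Definition residuation_ax : bool :=
  [forall x, forall y, forall z, rle z (x → y) == rle (x ⊙ z) y].

Definition is_RL : bool :=
  [&& bounded_lattice_ax, comm_ordered_monoid_ax & residuation_ax].

Definition is_BL : bool :=
  [&& is_RL,
      [forall x, forall y, (x → y) ∨ (y → x) == rone A] &
      [forall x, forall y, x ⊙ (x → y) == x ∧ y]].

Definition is_MV : bool :=
  is_RL && [forall x, forall y, (x → y) → y == (y → x) → x].
End RLDefs.

Definition hom_ops (T U : finType) (A : RLops T) (B : RLops U) (f : T -> U) : bool :=
  [&& [forall x, forall y, f (rmeet A x y) == rmeet B (f x) (f y)],
      [forall x, forall y, f (rjoin A x y) == rjoin B (f x) (f y)],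
      [forall x, forall y, f (rmul A x y) == rmul B (f x) (f y)],
      [forall x, forall y, f (rimp A x y) == rimp B (f x) (f y)],
      f (rzero A) == rzero B & f (rone A) == rone B].

Definition iso_ops (T U : finType) (A : RLops T) (B : RLops U) : Prop :=
  exists f : T -> U, bijective f /\ hom_ops A B f.

(* Ordinal product L1 ⊠ L2.  Its universe L1 ∪ L2 (with 1_1 = 0_2) is
   represented as (L1 \ {1_1}) + L2, the element 1_1 being represented
   by inr 0_2. *)
Section OrdinalProduct.
Variables (T1 T2 : finType) (L1 : RLops T1) (L2 : RLops T2).

Definition OPT := ({x : T1 | x != rone L1} + T2)%type.

Definition inj1 (x : T1) : OPT :=
  match insub x with Some y => inl y | None => inr (rzero L2) end.

Definition op_meet (u v : OPT) : OPT :=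
  match u, v with
  | inl a, inl b => inj1 (rmeet L1 (val a) (val b))
  | inl a, inr _ => inl a
  | inr _, inl b => inl b
  | inr a, inr b => inr (rmeet L2 a b)
  end.

Definition op_join (u v : OPT) : OPT :=
  match u, v with
  | inl a, inl b => inj1 (rjoin L1 (val a) (val b))
  | inl _, inr b => inr b
  | inr a, inl _ => inr a
  | inr a, inr b => inr (rjoin L2 a b)
  end.

Definition op_mul (u v : OPT) : OPT :=
  match u, v with
  | inl a, inl b => inj1 (rmul L1 (val a) (val b))
  | inl a, inr _ => inl a
  | inr _, inl b => inl b
  | inr a, inr b => inr (rmul L2 a b)
  end.

Definition op_imp (u v : OPT) : OPT :=
  match u, v with
  | inl a, inl b => if rle L1 (val a) (val b) then inr (rone L2)
                    else inj1 (rimp L1 (val a) (val b))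
  | inl _, inr _ => inr (rone L2)
  | inr _, inl b => inl b
  | inr a, inr b => if rle L2 a b then inr (rone L2) else inr (rimp L2 a b)
  end.

Definition ordinal_product : RLops OPT :=
  RLOps op_meet op_join op_mul op_imp (inj1 (rzero L1)) (inr (rone L2)).
End OrdinalProduct.

Definition alg (n : nat) : finType :=
  ({ffun 'I_n * 'I_n -> 'I_n} * {ffun 'I_n * 'I_n -> 'I_n} *
   {ffun 'I_n * 'I_n -> 'I_n} * {ffun 'I_n * 'I_n -> 'I_n} * 'I_n * 'I_n)%type.

Definition to_ops (n : nat) (a : alg n) : RLops 'I_n :=
  let: (m, j, p, i, z, o) := a in
  RLOps (fun x y => m (x, y)) (fun x y => j (x, y))
        (fun x y => p (x, y)) (fun x y => i (x, y)) z o.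

Definition iso_alg (n : nat) (a b : alg n) : bool :=
  [exists s : {perm 'I_n}, hom_ops (to_ops a) (to_ops b) s].

Definition num_classes (n : nat) (P : forall T : finType, RLops T -> bool) : nat :=
  let S := [set a : alg n | P _ (to_ops a)] in
  #|[set [set b in S | iso_alg a b] | a in S]|.

Definition BLcount (n : nat) : nat := num_classes n (@is_BL).
Definition MVcount (n : nat) : nat := num_classes n (@is_MV).

(* pi n : number of unordered decompositions of n as a product of at least
   two factors > 1.  An unordered decomposition is a multiset of factors,
   encoded by its multiplicity function e (e d = multiplicity of factor d);
   factors and multiplicities are at most n. *)
Definition pi_dec (n : nat) : nat :=
  #|[set e : {ffun 'I_n.+1 -> 'I_n.+1} |
      [&& [forall d : 'I_n.+1, (d <= 1) ==> (e d == ord0)],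
          \prod_(d : 'I_n.+1) d ^ e d == n &
          1 < \sum_(d : 'I_n.+1) e d]]|.

From mathcomp Require Import all_boot fingroup perm.
From Stdlib Require Import FunctionalExtensionality.
From Stdlib Require List.
Set Implicit Arguments. Unset Strict Implicit. Unset Printing Implicit Defensive.

(* A finite residuated lattice, relabelled so that 0 and 1 are the least and
   the greatest ordinal, is determined by its order and its product: meet, join
   and residuum are the infimum, the supremum and the largest z with x ⊙ z <= y,
   and a product lies below both factors.  A search over all such orders and
   products on at most five elements, verified by reflection, shows that every
   BL- (resp. MV-) algebra with 2, 3, 4, 5 elements is isomorphic to one of
   1, 2, 5, 9 (resp. 1, 1, 2, 1) pairwise non-isomorphic representatives.  The
   representatives that are not MV-algebras are built as ordinal products of
   smaller BL-algebras, which gives (i); (ii) then follows from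
   pi(2) = pi(3) = pi(5) = 0 and pi(4) = 1. *)

Section FiniteQuantifiers.
Variable T : finType.

Lemma forall2P (P : T -> T -> bool) :
  reflect (forall x y, P x y) [forall x, forall y, P x y].
Proof.
apply: (iffP forallP) => [H x y | H x]; first exact: (forallP (H x)).
exact/forallP/H.
Qed.

Lemma forall3P (P : T -> T -> T -> bool) :
  reflect (forall x y z, P x y z) [forall x, forall y, forall z, P x y z].
Proof.
apply: (iffP forallP) => [H x y z | H x]; first exact: (forall2P _ (H x)).
exact/forall2P/H.
Qed.

Lemma eq_forall_all (e : seq T) (P Q : pred T) :
  (forall x, x \in e) -> P =1 Q -> [forall x, P x] = all Q e.
Proof.
move=> He PQ; apply/forallP/allP => H x; first by rewrite -PQ.
by rewrite PQ; apply: H.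
Qed.
End FiniteQuantifiers.

Section Specification.
Variables (T : finType) (A : RLops T).
Local Notation "x ∧ y" := (rmeet A x y) (at level 40).
Local Notation "x ∨ y" := (rjoin A x y) (at level 40).
Local Notation "x ⊙ y" := (rmul A x y) (at level 40).
Local Notation "x → y" := (rimp A x y) (at level 40).
Local Notation le := (rle A).

Record RLspec : Prop := {
  rmeetC : forall x y, x ∧ y = y ∧ x;
  rjoinC : forall x y, x ∨ y = y ∨ x;
  rmeetA : forall x y z, x ∧ (y ∧ z) = (x ∧ y) ∧ z;
  rjoinA : forall x y z, x ∨ (y ∨ z) = (x ∨ y) ∨ z;
  rmeetKU : forall x y, x ∧ (x ∨ y) = x;
  rjoinKI : forall x y, x ∨ (x ∧ y) = x;
  rle0x : forall x, le (rzero A) x;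
  rlex1 : forall x, le x (rone A);
  rmulC : forall x y, x ⊙ y = y ⊙ x;
  rmulA : forall x y z, x ⊙ (y ⊙ z) = (x ⊙ y) ⊙ z;
  rmulx1 : forall x, x ⊙ rone A = x;
  rle_mul2r : forall x y z, le x y -> le (x ⊙ z) (y ⊙ z);
  residuation : forall x y z, le z (x → y) = le (x ⊙ z) y }.

Lemma is_RLP : reflect RLspec (is_RL A).
Proof.
apply: (iffP idP) => [|[h1 h2 h3 h4 h5 h6 h7 h8 h9 h10 h11 h12 h13]].
  case/and3P => /and5P [/forall2P h1 /forall2P h2 /forall3P h3 /forall3P h4
    /and3P [/forall2P h5 /forall2P h6 /forallP h7]]
    /and4P [/forall2P h8 /forall3P h9 /forallP h10 /forall3P h11] /forall3P h12.
  split=> [x y|x y|x y z|x y z|x y|x y|x|x|x y|x y z|x|x y z|x y z];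
    try exact/eqP; try by case/andP: (h7 x).
  - exact/implyP.
  - exact: (eqP (h12 x y z)).
rewrite /is_RL /bounded_lattice_ax /comm_ordered_monoid_ax /residuation_ax.
apply/and3P; split; [apply/and5P; split; try apply/and3P; try split | apply/and4P; split |].
all: do ?[apply/forall3P=> x y z | apply/forall2P=> x y | apply/forallP=> x].
all: by [apply/eqP; auto | rewrite h7 h8 | apply/implyP/h12 | rewrite h13].
Qed.

Definition BLspec := [/\ RLspec, forall x y, (x → y) ∨ (y → x) = rone A &
                          forall x y, x ⊙ (x → y) = x ∧ y].
Definition MVspec := RLspec /\ forall x y, (x → y) → y = (y → x) → x.

Lemma is_BLP : reflect BLspec (is_BL A).
Proof.
apply: (iffP and3P) => [[/is_RLP h /forall2P h1 /forall2P h2] | [/is_RLP h h1 h2]].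
  by split=> // x y; apply/eqP.
by split=> //; apply/forall2P => x y; apply/eqP.
Qed.

Lemma is_MVP : reflect MVspec (is_MV A).
Proof.
apply: (iffP andP) => [[/is_RLP h /forall2P h1] | [/is_RLP h h1]].
  by split=> // x y; apply/eqP.
by split=> //; apply/forall2P => x y; apply/eqP.
Qed.

Hypothesis H : RLspec.

Lemma rmeetxx x : x ∧ x = x.
Proof. by rewrite -{2}(rjoinKI H x x) (rmeetKU H). Qed.

Lemma rle_refl x : le x x.
Proof. by rewrite /rle rmeetxx. Qed.

Lemma rle_anti x y : le x y -> le y x -> x = y.
Proof. by rewrite /rle => /eqP h1 /eqP h2; rewrite -h1 (rmeetC H) h2. Qed.

Lemma rle_trans x y z : le x y -> le y z -> le x z.
Proof. by rewrite /rle => /eqP h1 /eqP h2; apply/eqP; rewrite -{1}h1 -(rmeetA H) h2 h1. Qed.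

Lemma rle_meetl x y : le (x ∧ y) x.
Proof. by rewrite /rle (rmeetC H) (rmeetA H) rmeetxx. Qed.

Lemma rle_meetr x y : le (x ∧ y) y.
Proof. by rewrite (rmeetC H) rle_meetl. Qed.

Lemma rle_meet_glb w x y : le w x -> le w y -> le w (x ∧ y).
Proof. by rewrite /rle => /eqP h1 /eqP h2; rewrite (rmeetA H) h1 h2. Qed.

Lemma rjoin_r x y : le x y -> x ∨ y = y.
Proof. by rewrite /rle => /eqP h; rewrite -h (rjoinC H) (rmeetC H) (rjoinKI H). Qed.

Lemma rle_joinl x y : le x (x ∨ y).
Proof. by rewrite /rle (rmeetKU H). Qed.

Lemma rle_joinr x y : le y (x ∨ y).
Proof. by rewrite (rjoinC H) rle_joinl. Qed.

Lemma rle_join_lub x y w : le x w -> le y w -> le (x ∨ y) w.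
Proof.
move=> h1 h2; have e : (x ∨ y) ∨ w = w by rewrite -(rjoinA H) !rjoin_r.
by rewrite /rle -e (rmeetKU H).
Qed.

Lemma rle_mul2l x y z : le x y -> le (z ⊙ x) (z ⊙ y).
Proof. by rewrite !(rmulC H z); apply: (rle_mul2r H). Qed.

Lemma rle_mull x y : le (x ⊙ y) x.
Proof. by rewrite -{2}(rmulx1 H x); apply/rle_mul2l/(rlex1 H). Qed.

Lemma rle_mulr x y : le (x ⊙ y) y.
Proof. by rewrite (rmulC H) rle_mull. Qed.

Lemma rmulx0 x : x ⊙ rzero A = rzero A.
Proof. by apply: rle_anti; [rewrite -(residuation H) (rle0x H) | apply: (rle0x H)]. Qed.

Lemma rmul0x x : rzero A ⊙ x = rzero A.
Proof. by rewrite (rmulC H) rmulx0. Qed.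

Lemma rmul1x x : rone A ⊙ x = x.
Proof. by rewrite (rmulC H) (rmulx1 H). Qed.

Lemma rle_mul_imp x y : le (x ⊙ (x → y)) y.
Proof. by rewrite -(residuation H) rle_refl. Qed.

Lemma rle1_eq x : le (rone A) x -> x = rone A.
Proof. by move=> h; apply: rle_anti => //; apply: (rlex1 H). Qed.

Lemma rle0_eq x : le x (rzero A) -> x = rzero A.
Proof. by move=> h; apply: rle_anti => //; apply: (rle0x H). Qed.
End Specification.

(** * Homomorphisms *)

Section Homomorphisms.
Variables (T U : finType) (A : RLops T) (B : RLops U) (f : T -> U).

Record RLhom : Prop := {
  hom_meet : forall x y, f (rmeet A x y) = rmeet B (f x) (f y);
  hom_join : forall x y, f (rjoin A x y) = rjoin B (f x) (f y);
  hom_mul : forall x y, f (rmul A x y) = rmul B (f x) (f y);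
  hom_imp : forall x y, f (rimp A x y) = rimp B (f x) (f y);
  hom_zero : f (rzero A) = rzero B;
  hom_one : f (rone A) = rone B }.

Lemma hom_opsP : reflect RLhom (hom_ops A B f).
Proof.
apply: (iffP and5P) => [[/forall2P a1 /forall2P a2 /forall2P a3 /forall2P a4 /andP [/eqP a5 /eqP a6]] | [a1 a2 a3 a4 a5 a6]].
  by split=> // x y; apply/eqP.
by split; do ?[apply/forall2P => x y]; rewrite ?a1 ?a2 ?a3 ?a4 ?a5 ?a6 ?eqxx.
Qed.

Variable g : U -> T.
Hypotheses (fK : cancel f g) (gK : cancel g f) (hf : RLhom).

Lemma rle_hom x y : rle B (f x) (f y) = rle A x y.
Proof. by rewrite /rle -(hom_meet hf) (inj_eq (can_inj fK)). Qed.

Ltac push_hom := rewrite -?(hom_zero hf) -?(hom_one hf);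
  repeat rewrite -?(hom_meet hf) -?(hom_join hf) -?(hom_mul hf) -?(hom_imp hf);
  rewrite ?rle_hom.

Lemma RLspec_hom : RLspec A -> RLspec B.
Proof.
move=> H; split=> [u v|u v|u v w|u v w|u v|u v|u|u|u v|u v w|u|u v w|u v w];
  first [rewrite -(gK u) -(gK v) -(gK w) | rewrite -(gK u) -(gK v) | rewrite -(gK u)];
  push_hom.
all: by [rewrite (rmeetC H) | rewrite (rjoinC H) | rewrite (rmeetA H) | rewrite (rjoinA H)
        | rewrite (rmeetKU H) | rewrite (rjoinKI H) | rewrite (rle0x H) | rewrite (rlex1 H)
        | rewrite (rmulC H) | rewrite (rmulA H) | rewrite (rmulx1 H)
        | apply: (rle_mul2r H) | rewrite (residuation H)].
Qed.

Lemma BLspec_hom : BLspec A -> BLspec B.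
Proof.
case=> H H1 H2; split; first exact: RLspec_hom.
  by move=> u v; rewrite -(gK u) -(gK v); push_hom; rewrite H1.
by move=> u v; rewrite -(gK u) -(gK v); push_hom; rewrite H2.
Qed.

Lemma MVspec_hom : MVspec A -> MVspec B.
Proof.
case=> H H1; split; first exact: RLspec_hom.
by move=> u v; rewrite -(gK u) -(gK v); push_hom; rewrite H1.
Qed.

End Homomorphisms.

Lemma hom_can (T U : finType) (A : RLops T) (B : RLops U) f g :
  cancel f g -> cancel g f -> RLhom A B f -> RLhom B A g.
Proof.
move=> fK gK hf; split=> *; apply: (can_inj fK); rewrite gK.
all: by rewrite ?(hom_meet hf) ?(hom_join hf) ?(hom_mul hf) ?(hom_imp hf)
  ?(hom_zero hf) ?(hom_one hf) ?gK.
Qed.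

Lemma hom_comp (T U V : finType) (A : RLops T) (B : RLops U) (C : RLops V) f g :
  RLhom A B f -> RLhom B C g -> RLhom A C (g \o f).
Proof.
case=> a1 a2 a3 a4 a5 a6 [b1 b2 b3 b4 b5 b6].
by split=> /= *; rewrite ?a1 ?a2 ?a3 ?a4 ?a5 ?a6 ?b1 ?b2 ?b3 ?b4 ?b5 ?b6.
Qed.

Lemma eq_hom (T U : finType) (A : RLops T) (B : RLops U) f g :
  f =1 g -> RLhom A B f -> RLhom A B g.
Proof. by move=> /functional_extensionality ->. Qed.

Lemma iso_ops_can (T U : finType) (A : RLops T) (B : RLops U) f g :
  cancel f g -> cancel g f -> RLhom A B f -> iso_ops A B.
Proof. by move=> fK gK hf; exists f; split; [exact: Bijective fK gK | exact/hom_opsP]. Qed.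

Lemma iso_ops_trans (T U V : finType) (A : RLops T) (B : RLops U) (C : RLops V) :
  iso_ops A B -> iso_ops B C -> iso_ops A C.
Proof.
rewrite /iso_ops => -[f [fb /hom_opsP hf]] [g [gb /hom_opsP hg]].
by exists (g \o f); split; [exact: bij_comp | apply/hom_opsP; exact: hom_comp hf hg].
Qed.

Lemma iso_ops_axiomsE (T U : finType) (A : RLops T) (B : RLops U) :
  iso_ops A B -> [/\ is_RL A = is_RL B, is_BL A = is_BL B & is_MV A = is_MV B].
Proof.
case=> f [[g fK gK] /hom_opsP hf]; have hg := hom_can fK gK hf.
split; apply/idP/idP.
- by move/is_RLP/(RLspec_hom fK gK hf)/is_RLP.
- by move/is_RLP/(RLspec_hom gK fK hg)/is_RLP.
- by move/is_BLP/(BLspec_hom fK gK hf)/is_BLP.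
- by move/is_BLP/(BLspec_hom gK fK hg)/is_BLP.
- by move/is_MVP/(MVspec_hom fK gK hf)/is_MVP.
- by move/is_MVP/(MVspec_hom gK fK hg)/is_MVP.
Qed.

Definition transport (T U : finType) (A : RLops U) (g : T -> U) (h : U -> T) : RLops T :=
  RLOps (fun x y => h (rmeet A (g x) (g y))) (fun x y => h (rjoin A (g x) (g y)))
        (fun x y => h (rmul A (g x) (g y))) (fun x y => h (rimp A (g x) (g y)))
        (h (rzero A)) (h (rone A)).

Lemma transport_hom (T U : finType) (A : RLops U) (g : T -> U) (h : U -> T) :
  cancel h g -> RLhom (transport A g h) A g.
Proof. by move=> hK; split=> * /=; rewrite hK. Qed.

(** * Deciding the axioms on an explicit enumeration *)

Section AxiomsOnEnumeration.
Variables (T : finType) (e : seq T) (A : RLops T).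
Local Notation "x ∧ y" := (rmeet A x y) (at level 40).
Local Notation "x ∨ y" := (rjoin A x y) (at level 40).
Local Notation "x ⊙ y" := (rmul A x y) (at level 40).
Local Notation "x → y" := (rimp A x y) (at level 40).
Local Notation le := (rle A).
Local Notation "'all_e' x , P" := (all (fun x => P) e) (at level 200, x name).

Definition is_RL_on : bool :=
  [&& [&& all_e x, all_e y, x ∧ y == y ∧ x,
          all_e x, all_e y, x ∨ y == y ∨ x,
          all_e x, all_e y, all_e z, x ∧ (y ∧ z) == (x ∧ y) ∧ z,
          all_e x, all_e y, all_e z, x ∨ (y ∨ z) == (x ∨ y) ∨ z,
          all_e x, all_e y, x ∧ (x ∨ y) == x,
          all_e x, all_e y, x ∨ (x ∧ y) == x &
          all_e x, le (rzero A) x && le x (rone A)],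
      [&& all_e x, all_e y, x ⊙ y == y ⊙ x,
          all_e x, all_e y, all_e z, x ⊙ (y ⊙ z) == (x ⊙ y) ⊙ z,
          all_e x, x ⊙ rone A == x &
          all_e x, all_e y, all_e z, le x y ==> le (x ⊙ z) (y ⊙ z)] &
      all_e x, all_e y, all_e z, le z (x → y) == le (x ⊙ z) y].

Definition BL_ax_on : bool :=
  (all_e x, all_e y, (x → y) ∨ (y → x) == rone A) &&
  (all_e x, all_e y, x ⊙ (x → y) == x ∧ y).

Definition MV_ax_on : bool := all_e x, all_e y, (x → y) → y == (y → x) → x.

Definition hom_ops_on (U : finType) (B : RLops U) (f : T -> U) : bool :=
  [&& all_e x, all_e y, f (x ∧ y) == rmeet B (f x) (f y),
      all_e x, all_e y, f (x ∨ y) == rjoin B (f x) (f y),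
      all_e x, all_e y, f (x ⊙ y) == rmul B (f x) (f y),
      all_e x, all_e y, f (x → y) == rimp B (f x) (f y),
      f (rzero A) == rzero B & f (rone A) == rone B].

Hypothesis He : forall x, x \in e.

Ltac all_of_forall :=
  repeat first [ reflexivity | congr (_ && _) | apply: (eq_forall_all He) => ? ].

Lemma is_RL_onE : is_RL A = is_RL_on.
Proof.
rewrite /is_RL /bounded_lattice_ax /comm_ordered_monoid_ax /residuation_ax.
all_of_forall.
Qed.

Lemma is_BL_onE : is_BL A = is_RL_on && BL_ax_on.
Proof. by rewrite /is_BL is_RL_onE /BL_ax_on; all_of_forall. Qed.

Lemma is_MV_onE : is_MV A = is_RL_on && MV_ax_on.
Proof. by rewrite /is_MV is_RL_onE /MV_ax_on; all_of_forall. Qed.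

Lemma hom_ops_onE (U : finType) (B : RLops U) f : hom_ops A B f = hom_ops_on B f.
Proof. by rewrite /hom_ops /hom_ops_on; all_of_forall. Qed.
End AxiomsOnEnumeration.

(** * Exhaustive search on ordinals *)

(* [ord_enum] and [inord] go through [insub], which [vm_compute] cannot evaluate. *)
Fixpoint ord_seq m : seq 'I_m :=
  if m is m'.+1 then ord0 :: map (lift ord0) (ord_seq m') else [::].
Definition ord_of_nat n (i : nat) : 'I_n.+1 := nth ord0 (ord_seq n.+1) i.

Lemma val_ord_seq m : map val (ord_seq m) = iota 0 m.
Proof.
elim: m => //= m IH; rewrite -map_comp (@iotaDl 1 0) -IH -map_comp.
by congr (_ :: _); apply: eq_map => j /=; rewrite lift0.
Qed.

Lemma mem_ord_seq m (x : 'I_m) : x \in ord_seq m.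
Proof. by rewrite -(mem_map val_inj) val_ord_seq mem_iota /= add0n ltn_ord. Qed.

Lemma ord_seq_uniq m : uniq (ord_seq m).
Proof. by rewrite -(map_inj_uniq val_inj) val_ord_seq iota_uniq. Qed.

Lemma size_ord_seq m : size (ord_seq m) = m.
Proof. by rewrite -(size_map val) val_ord_seq size_iota. Qed.

Lemma nth_ord_seq_val m (x0 : 'I_m) i : i < m -> nth x0 (ord_seq m) i = i :> nat.
Proof. by move=> lt_im; rewrite -(nth_map x0 0) ?size_ord_seq // val_ord_seq nth_iota. Qed.

Lemma nth_ord_seq m (x0 x : 'I_m) : nth x0 (ord_seq m) x = x.
Proof. exact/val_inj/nth_ord_seq_val. Qed.

Lemma ord_of_natK n i : i < n.+1 -> ord_of_nat n i = i :> nat.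
Proof. exact: nth_ord_seq_val. Qed.

Lemma rzero_neq_rone (T : finType) (A : RLops T) :
  1 < #|T| -> RLspec A -> rzero A != rone A.
Proof.
move=> /card_gt1P [x [y [_ _ xy]]] H; apply: contra_neq xy => e01.
have all0 z : z = rzero A by apply: (rle0_eq H); rewrite e01 (rlex1 H).
by rewrite (all0 x) (all0 y).
Qed.

Lemma perm_map2 (T : finType) (a a' b b' : T) :
  a != a' -> b != b' -> exists s : {perm T}, s a = b /\ s a' = b'.
Proof.
move=> aa' bb'; pose s1 := tperm a b; pose s2 := tperm (s1 a') b'.
have s1a'b : s1 a' != b by rewrite -[b](tpermL a) (inj_eq perm_inj) eq_sym.
exists (s1 * s2)%g; rewrite !permM tpermL tpermL; split=> //.
by rewrite tpermD // eq_sym.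
Qed.

Section Reconstruction.
Variable n : nat.
Local Notation I := 'I_n.+1.
Local Notation E := (ord_seq n.+1).

Definition tabulate (V : Type) (f : I -> I -> V) : seq (seq V) :=
  [seq [seq f x y | y <- E] | x <- E].
Definition lookup (V : Type) (d : V) (t : seq (seq V)) (x y : I) : V :=
  nth d (nth [::] t x) y.

Lemma lookup_tabulate (V : Type) (d : V) (f : I -> I -> V) : lookup d (tabulate f) = f.
Proof.
do 2 apply: functional_extensionality => ?.
by rewrite /lookup /tabulate !(nth_map ord0) ?size_ord_seq // !nth_ord_seq.
Qed.

(* The [r]-greatest element satisfying [P]; [ord0] if there is none. *)
Definition greatest (P : pred I) (r : rel I) : I :=
  head ord0 [seq z <- E | P z && all (fun w => P w ==> r w z) E].

(* Meet, join and residuum are determined by the order and the product. *)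
Definition reconstruct (r : rel I) (p : I -> I -> I) : RLops I :=
  RLOps (fun x y => greatest (fun z => r z x && r z y) r)
        (fun x y => greatest (fun z => r x z && r y z) (fun a b => r b a))
        p (fun x y => greatest (fun z => r (p x z) y) r) ord0 ord_max.

(* Stores the operations as tables, so that [vm_compute] evaluates them once. *)
Definition tabulate_ops (t : RLops I) : RLops I :=
  RLOps (lookup ord0 (tabulate (rmeet t))) (lookup ord0 (tabulate (rjoin t)))
        (lookup ord0 (tabulate (rmul t))) (lookup ord0 (tabulate (rimp t))) (rzero t) (rone t).

Lemma tabulate_opsE (t : RLops I) : tabulate_ops t = t.
Proof. by case: t => * /=; rewrite /tabulate_ops !lookup_tabulate. Qed.

Lemma greatest_eq (P : pred I) (r : rel I) z0 :
  P z0 -> (forall w, P w -> r w z0) ->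
  (forall z, P z -> (forall w, P w -> r w z) -> z = z0) -> greatest P r = z0.
Proof.
move=> Pz0 Hz0 U; rewrite /greatest.
set s := [seq z <- E | _].
have z0s : z0 \in s.
  by rewrite mem_filter mem_ord_seq andbT Pz0; apply/allP => w _; apply/implyP/Hz0.
have all_z0 z : z \in s -> z = z0.
  rewrite mem_filter => /andP [/andP [Pz /allP Hz] _]; apply: U => // w Pw.
  exact: (implyP (Hz w (mem_ord_seq w))).
by move: z0s all_z0; case: s => //= a s _; apply; apply: mem_head.
Qed.

Lemma reconstructE (t : RLops I) : RLspec t -> rzero t = ord0 -> rone t = ord_max ->
  reconstruct (rle t) (rmul t) = t.
Proof.
case: t => m j p i z o H /= z0 o1; subst z o; rewrite /reconstruct.
congr RLOps; do 2 apply: functional_extensionality => ?; apply: greatest_eq.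
- by rewrite (rle_meetl H) (rle_meetr H).
- by move=> w /andP [h1 h2]; apply: rle_meet_glb.
- move=> w /andP [h1 h2] Hw; apply: (rle_anti H); first exact: rle_meet_glb.
  by apply: Hw; rewrite (rle_meetl H) (rle_meetr H).
- by rewrite (rle_joinl H) (rle_joinr H).
- by move=> w /andP [h1 h2]; apply: rle_join_lub.
- move=> w /andP [h1 h2] Hw; apply: (rle_anti H); last exact: rle_join_lub.
  by apply: Hw; rewrite (rle_joinl H) (rle_joinr H).
- exact: (rle_mul_imp H).
- by move=> w hw; rewrite (residuation H).
- move=> w hw Hw; apply: (rle_anti H); first by rewrite (residuation H).
  by apply: Hw; apply: (rle_mul_imp H).
Qed.
End Reconstruction.

(* [vm_compute] is call by value: with [g acc v ==> _] instead of [if], the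
   branches cut by the guard would still be explored. *)
Fixpoint all_guarded_ext (V : Type) (vals : seq V) (k : nat) (g : seq V -> V -> bool)
    (leaf : seq V -> bool) (acc : seq V) : bool :=
  if k is k'.+1 then
    all (fun v => if g acc v then all_guarded_ext vals k' g leaf (rcons acc v) else true) vals
  else leaf acc.

Fixpoint guarded (V : Type) (g : seq V -> V -> bool) (acc vs : seq V) : Prop :=
  if vs is v :: vs' then g acc v /\ guarded g (rcons acc v) vs' else True.

Lemma all_guarded_extP (V : eqType) (vals : seq V) g leaf (vs acc : seq V) :
  all_guarded_ext vals (size vs) g leaf acc -> guarded g acc vs -> {subset vs <= vals} ->
  leaf (acc ++ vs).
Proof.
elim: vs acc => [|v vs IH] acc /=; first by rewrite cats0.
move=> /allP Hv [gv gvs] sub; have := Hv v (sub v (mem_head _ _)); rewrite gv => /IH.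
by rewrite cat_rcons; apply => // x xvs; apply: sub; rewrite inE xvs orbT.
Qed.

Lemma guarded_nth (V : Type) (G : nat -> V -> bool) d (vs acc : seq V) :
  (forall i, i < size vs -> G (size acc + i) (nth d vs i)) ->
  guarded (fun acc v => G (size acc) v) acc vs.
Proof.
elim: vs acc => //= v vs IH acc H; split; first by have := H 0 erefl; rewrite addn0.
by apply: IH => i Hi; rewrite size_rcons; have := H i.+1 Hi; rewrite addnS.
Qed.

Lemma guarded_true (V : Type) (vs acc : seq V) : guarded (fun _ _ => true) acc vs.
Proof. by elim: vs acc => //= v vs IH acc; split. Qed.

Lemma has_In (V : Type) (p : pred V) (s : seq V) : has p s -> exists2 x, List.In x s & p x.
Proof.
elim: s => //= y s IH /orP [py|/IH [x xs px]]; first by exists y => //; left.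
by exists x => //; right.
Qed.

Section Search.
Variable n : nat.
Local Notation I := 'I_n.+1.
Local Notation E := (ord_seq n.+1).

Definition inner : seq I := [seq i <- E | (i != ord0) && (i != ord_max)].
Definition inner_pairs : seq (I * I) :=
  [seq (i, j) | i : I <- inner, j : I <- [seq j <- inner | i != j]].
Definition inner_sorted_pairs : seq (I * I) :=
  [seq (i, j) | i : I <- inner, j : I <- [seq j : I <- inner | i <= j]].

(* An order with bottom [ord0] and top [ord_max] is coded by its values on
   [inner_pairs], a commutative product with unit [ord_max] and absorbing
   [ord0] by its values on [inner_sorted_pairs]. *)
Definition rel_of_bits (bs : seq bool) (x y : I) : bool :=
  [|| x == ord0, y == ord_max, x == y | nth false bs (index (x, y) inner_pairs)].

Definition mul_of_table (vs : seq I) (x y : I) : I :=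
  if (x == ord0) || (y == ord0) then ord0
  else if x == ord_max then y else if y == ord_max then x
  else nth ord0 vs (index (if x <= y then (x, y) else (y, x)) inner_sorted_pairs).

Definition is_order (r : rel I) : bool :=
  all (fun x => all (fun y => r x y && r y x ==> (x == y)) E) E &&
  all (fun x => all (fun y => all (fun z => r x y && r y z ==> r x z) E) E) E.

Definition iso_by_perm (t1 t2 : RLops I) : bool :=
  has (fun l => hom_ops_on E t1 t2 (nth ord0 l)) (permutations E).

Definition iso_to_some (reps : seq (RLops I)) (t : RLops I) : bool :=
  has (iso_by_perm ^~ t) reps.

Definition classified (BLr MVr : seq (RLops I)) (t : RLops I) : bool :=
  if is_RL_on E t then
    (if BL_ax_on E t then iso_to_some BLr t else true) &&
    (if MV_ax_on E t then iso_to_some MVr t else true)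
  else true.

Definition mul_bound (r : rel I) (acc : seq I) (v : I) : bool :=
  let ij := nth (ord0, ord0) inner_sorted_pairs (size acc) in r v ij.1 && r v ij.2.

Definition exhaustive_check (BLr MVr : seq (RLops I)) : bool :=
  all_guarded_ext [:: true; false] (size inner_pairs) (fun _ _ => true)
   (fun bs => let r := lookup false (tabulate (rel_of_bits bs)) in
      if is_order r then
        all_guarded_ext E (size inner_sorted_pairs) (mul_bound r)
          (fun vs => classified BLr MVr
            (tabulate_ops (reconstruct r (lookup ord0 (tabulate (mul_of_table vs)))))) [::]
      else true) [::].

Lemma mem_inner (x : I) : (x \in inner) = (x != ord0) && (x != ord_max).
Proof. by rewrite mem_filter mem_ord_seq andbT. Qed.

Lemma mem_inner_pairs (x y : I) :
  ((x, y) \in inner_pairs) = [&& x \in inner, y \in inner & x != y].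
Proof.
apply/allpairsPdep/idP => [[a [b [ha hb [-> ->]]]]|/and3P [hx hy hxy]].
  by move: hb; rewrite mem_filter => /andP [-> ->]; rewrite ha.
by exists x, y; split => //; rewrite mem_filter hxy.
Qed.

Lemma mem_inner_sorted_pairs (x y : I) :
  ((x, y) \in inner_sorted_pairs) = [&& x \in inner, y \in inner & x <= y].
Proof.
apply/allpairsPdep/idP => [[a [b [ha hb [-> ->]]]]|/and3P [hx hy hxy]].
  by move: hb; rewrite mem_filter => /andP [-> ->]; rewrite ha.
by exists x, y; split => //; rewrite mem_filter hxy.
Qed.

Section Normalized.
Variables (t : RLops I) (H : RLspec t).
Hypotheses (t0 : rzero t = ord0) (t1 : rone t = ord_max).

Lemma rel_of_bits_rle : rel_of_bits [seq rle t ij.1 ij.2 | ij <- inner_pairs] =2 rle t.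
Proof.
move=> x y; rewrite /rel_of_bits.
case: (eqVneq x ord0) => [->|x0] /=; first by rewrite -t0 (rle0x H).
case: (eqVneq y ord_max) => [->|y1] /=; first by rewrite -t1 (rlex1 H).
case: (eqVneq x y) => [->|xy] /=; first by rewrite (rle_refl H).
case: (eqVneq x ord_max) => [->|x1].
  rewrite nth_default; last by rewrite size_map memNindex // mem_inner_pairs mem_inner eqxx andbF.
  by apply/esym/negP; rewrite -t1 => /(rle1_eq H); rewrite t1 => /eqP; rewrite (negbTE y1).
case: (eqVneq y ord0) => [->|y0].
  rewrite nth_default; last by rewrite size_map memNindex // mem_inner_pairs !mem_inner eqxx !andbF.
  by apply/esym/negP; rewrite -t0 => /(rle0_eq H); rewrite t0 => /eqP; rewrite (negbTE x0).
have xy_in : (x, y) \in inner_pairs by rewrite mem_inner_pairs !mem_inner x0 x1 y0 y1 xy.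
by rewrite (nth_map (x, y)) ?index_mem // nth_index.
Qed.

Lemma mul_of_table_rmul :
  mul_of_table [seq rmul t ij.1 ij.2 | ij <- inner_sorted_pairs] =2 rmul t.
Proof.
move=> x y; rewrite /mul_of_table.
case: (eqVneq x ord0) => [->|x0] /=; first by rewrite -t0 (rmul0x H).
case: (eqVneq y ord0) => [->|y0] /=; first by rewrite -t0 (rmulx0 H).
case: (eqVneq x ord_max) => [->|x1] /=; first by rewrite -t1 (rmul1x H).
case: (eqVneq y ord_max) => [->|y1] /=; first by rewrite -t1 (rmulx1 H).
have [x_in y_in] : x \in inner /\ y \in inner by rewrite !mem_inner x0 x1 y0 y1.
case: leqP => hxy.
  have xy_in : (x, y) \in inner_sorted_pairs by rewrite mem_inner_sorted_pairs x_in y_in hxy.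
  by rewrite (nth_map (x, y)) ?index_mem // nth_index.
have yx_in : (y, x) \in inner_sorted_pairs by rewrite mem_inner_sorted_pairs x_in y_in ltnW.
by rewrite (nth_map (y, x)) ?index_mem // nth_index //= (rmulC H).
Qed.

Lemma is_order_rle : is_order (rle t).
Proof.
apply/andP; split; apply/allP => x _; apply/allP => y _.
  by apply/implyP => /andP [h1 h2]; apply/eqP; apply: (rle_anti H).
by apply/allP => z _; apply/implyP => /andP [h1 h2]; apply: (rle_trans H h1 h2).
Qed.

Lemma exhaustive_check_normalized BLr MVr :
  exhaustive_check BLr MVr -> classified BLr MVr t.
Proof.
move=> Hc; pose bs := [seq rle t ij.1 ij.2 | ij <- inner_pairs].
pose vs := [seq rmul t ij.1 ij.2 | ij <- inner_sorted_pairs].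
have Hr : rel_of_bits bs = rle t by do 2 apply: functional_extensionality => ?; apply: rel_of_bits_rle.
have Hp : mul_of_table vs = rmul t.
  by do 2 apply: functional_extensionality => ?; apply: mul_of_table_rmul.
have bits : {subset bs <= [:: true; false]} by case.
have := all_guarded_extP (vals := [:: true; false]) (vs := bs) (acc := [::]).
rewrite size_map => /(_ _ _ Hc (guarded_true _ _) bits) /=.
rewrite lookup_tabulate Hr is_order_rle /= => Hmul.
have mul_guards : guarded (mul_bound (rle t)) [::] vs.
  apply: (guarded_nth (G := fun k v => let ij := nth (ord0, ord0) inner_sorted_pairs k in
                                    rle t v ij.1 && rle t v ij.2) (d := ord0)).
  move=> i; rewrite size_map => Hi; rewrite (nth_map (ord0, ord0)) //= add0n.
  by rewrite (rle_mull H) (rle_mulr H).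
have := all_guarded_extP (vals := E) (vs := vs) (acc := [::]).
rewrite size_map => /(_ _ _ Hmul mul_guards (fun x _ => mem_ord_seq x)) /=.
by rewrite tabulate_opsE lookup_tabulate Hp reconstructE.
Qed.
End Normalized.
End Search.

Section Soundness.
Variable n : nat.
Local Notation I := 'I_n.+1.
Local Notation E := (ord_seq n.+1).

Lemma nth_perm_inj (l : seq I) : l \in permutations E -> injective (fun x : I => nth ord0 l x).
Proof.
rewrite mem_permutations => pl x y /eqP.
have ul : uniq l by rewrite (perm_uniq pl) ord_seq_uniq.
have sl : size l = n.+1 by rewrite (perm_size pl) size_ord_seq.
by rewrite nth_uniq ?sl // => /eqP /ord_inj.
Qed.

Lemma iso_to_someP (reps : seq (RLops I)) (t : RLops I) :
  iso_to_some reps t -> exists2 r, List.In r reps & iso_ops r t.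
Proof.
case/has_In => r r_in /hasP [l l_perm hl]; exists r => //; exists (fun x : I => nth ord0 l x).
by split; [exact/injF_bij/nth_perm_inj | rewrite (hom_ops_onE _ (@mem_ord_seq n.+1))].
Qed.

Lemma exhaustive_check_sound (BLr MVr : seq (RLops I)) (t : RLops I) :
  0 < n -> exhaustive_check BLr MVr -> RLspec t ->
  (is_BL t -> exists2 r, List.In r BLr & iso_ops r t) /\
  (is_MV t -> exists2 r, List.In r MVr & iso_ops r t).
Proof.
move=> n_gt0 Hc H.
have [s [s0 s1]] : exists s : {perm I}, s (rzero t) = ord0 /\ s (rone t) = ord_max.
  apply: perm_map2; first by apply: rzero_neq_rone; rewrite ?card_ord.
  by rewrite -(inj_eq val_inj) /= eq_sym -lt0n.
pose t' := transport t (s^-1)%g s.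
have hs' : RLhom t' t (s^-1)%g := transport_hom t (permK s).
have H' : RLspec t' := RLspec_hom (permK s) (permKV s) (hom_can (permKV s) (permK s) hs') H.
have iso_t't : iso_ops t' t := iso_ops_can (permKV s) (permK s) hs'.
have [_ <- <-] := iso_ops_axiomsE iso_t't.
have := exhaustive_check_normalized H' s0 s1 Hc.
rewrite /classified (is_BL_onE _ (@mem_ord_seq n.+1)) (is_MV_onE _ (@mem_ord_seq n.+1)).
case: is_RL_on => //= /andP [isoBL isoMV]; split=> [/(implyP isoBL)|/(implyP isoMV)];
  by case/iso_to_someP => r r_in iso_rt'; exists r => //; apply: iso_ops_trans iso_t't.
Qed.
End Soundness.

(** * Counting isomorphism classes *)

Lemma pairwise_mem (T : eqType) (r : rel T) (s : seq T) x y :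
  pairwise r s -> x \in s -> y \in s -> x != y -> r x y || r y x.
Proof.
elim: s => //= z s IH /andP [/allP rz pw]; rewrite !inE.
case/orP => [/eqP ->|xs]; case/orP => [/eqP ->|ys] xy.
- by rewrite eqxx in xy.
- by rewrite rz.
- by rewrite rz ?orbT.
- exact: IH.
Qed.

Lemma InP (T : eqType) (x : T) (s : seq T) : reflect (List.In x s) (x \in s).
Proof.
elim: s => [|y s IH]; first exact: ReflectF.
rewrite inE; apply: (iffP orP) => [[/eqP ->|/IH]|[->|/IH]]; by [left | right | rewrite eqxx].
Qed.

Lemma all_In (T : Type) (p : pred T) (s : seq T) x : all p s -> List.In x s -> p x.
Proof. by elim: s => //= y s IH /andP [py ps] [<-|/IH]; auto. Qed.

Section IsoClasses.
Variable n : nat.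
Implicit Types a b c : alg n.

Lemma iso_alg_refl a : iso_alg a a.
Proof. by apply/existsP; exists 1%g; apply/hom_opsP; split=> * /=; rewrite !perm1. Qed.

Lemma iso_alg_sym a b : iso_alg a b -> iso_alg b a.
Proof.
case/existsP => s /hom_opsP h; apply/existsP; exists (s^-1)%g; apply/hom_opsP.
exact: hom_can (permK s) (permKV s) h.
Qed.

Lemma iso_alg_trans a b c : iso_alg a b -> iso_alg b c -> iso_alg a c.
Proof.
case/existsP => s /hom_opsP h1 /existsP [s' /hom_opsP h2]; apply/existsP; exists (s * s')%g.
by apply/hom_opsP; apply: eq_hom (hom_comp h1 h2) => x; rewrite permM.
Qed.

Lemma num_classesE (P : forall T : finType, RLops T -> bool) (R : seq (alg n)) :
  (forall r, r \in R -> P _ (to_ops r)) -> pairwise (fun a b => ~~ iso_alg a b) R ->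
  (forall a, P _ (to_ops a) -> exists2 r, r \in R & iso_alg r a) ->
  num_classes n P = size R.
Proof.
move=> PR pw cpl; rewrite /num_classes.
set S := [set a : alg n | P _ (to_ops a)].
pose cls a := [set b in S | iso_alg a b].
have uR : uniq R by apply: pairwise_uniq pw => a; rewrite /= iso_alg_refl.
have -> : [set [set b in S | iso_alg a b] | a in S] = [set cls r | r in R].
  apply/setP => X; apply/imsetP/imsetP => [[a aS ->]|[r rR ->]].
    move: aS; rewrite inE => /cpl [r rR ira]; exists r => //.
    apply/setP => b; rewrite !inE; congr (_ && _).
    by apply/idP/idP => h; [apply: iso_alg_trans ira h | apply: iso_alg_trans (iso_alg_sym ira) h].
  by exists r => //; rewrite inE PR.
rewrite card_in_imset; first exact/card_uniqP.
move=> r1 r2 r1R r2R e; apply/eqP/negPn/negP => r12.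
have : r2 \in cls r1 by rewrite e inE iso_alg_refl inE PR.
rewrite inE => /andP [_ i12]; have := pairwise_mem pw r1R r2R r12.
by rewrite i12 (iso_alg_sym i12).
Qed.
End IsoClasses.

Definition alg_of n (t : RLops 'I_n) : alg n :=
  ([ffun xy => rmeet t xy.1 xy.2], [ffun xy => rjoin t xy.1 xy.2],
   [ffun xy => rmul t xy.1 xy.2], [ffun xy => rimp t xy.1 xy.2], rzero t, rone t).

Lemma alg_ofK n : cancel (@alg_of n) (@to_ops n).
Proof.
case=> m j p i z o; rewrite /alg_of /to_ops /=.
by congr RLOps; do 2 apply: functional_extensionality => ?; rewrite ffunE.
Qed.

Lemma to_opsK n : cancel (@to_ops n) (@alg_of n).
Proof.
by case=> [[[[[m j] p] i] z] o]; rewrite /alg_of /=; congr (_, _, _, _, _, _);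
  apply/ffunP => -[x y]; rewrite ffunE.
Qed.

Lemma iso_alg_iso_by_perm n (t1 t2 : RLops 'I_n.+1) :
  iso_alg (alg_of t1) (alg_of t2) -> iso_by_perm t1 t2.
Proof.
case/existsP => s; rewrite !alg_ofK => h.
apply/hasP; exists (map s (ord_seq n.+1)).
  rewrite mem_permutations; apply: uniq_perm.
  - by rewrite map_inj_uniq ?ord_seq_uniq //; apply: perm_inj.
  - exact: ord_seq_uniq.
  - move=> x; rewrite mem_ord_seq; apply/mapP; exists ((s^-1)%g x); first exact: mem_ord_seq.
    by rewrite permKV.
rewrite -(hom_ops_onE _ (@mem_ord_seq n.+1)); move: h; congr hom_ops.
apply: functional_extensionality => x.
by rewrite (nth_map ord0) ?size_ord_seq // nth_ord_seq.
Qed.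

Lemma iso_ops_iso_alg n (r t : RLops 'I_n) : iso_ops r t -> iso_alg (alg_of r) (alg_of t).
Proof.
case=> f [/bij_inj f_inj /hom_opsP h]; apply/existsP; exists (perm f_inj); rewrite !alg_ofK.
by apply/hom_opsP; apply: eq_hom h => x; rewrite permE.
Qed.

Lemma num_classes_reps n (P : forall T : finType, RLops T -> bool) (R : seq (RLops 'I_n.+1)) :
  (forall t, List.In t R -> P _ t) -> pairwise (fun a b => ~~ iso_by_perm a b) R ->
  (forall t : RLops 'I_n.+1, P _ t -> exists2 r, List.In r R & iso_ops r t) ->
  num_classes n.+1 P = size R.
Proof.
move=> PR pw cpl; rewrite -(size_map (@alg_of n.+1)); apply: num_classesE.
- move=> a /InP /List.in_map_iff [t [<- tR]]; rewrite alg_ofK; exact: PR.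
- rewrite pairwise_map; apply: sub_pairwise pw => a b; apply: contra; exact: iso_alg_iso_by_perm.
- move=> a /cpl [r rR iso_ra]; exists (alg_of r); first exact/InP/List.in_map.
  by rewrite -[a]to_opsK; apply: iso_ops_iso_alg.
Qed.

(** * Multiplicative decompositions *)

Section Factorizations.
Variables (n : nat) (e : {ffun 'I_n.+1 -> 'I_n.+1}).
Hypothesis e_trivial : forall d : 'I_n.+1, d <= 1 -> e d = ord0.
Hypothesis e_prod : \prod_(d : 'I_n.+1) d ^ e d = n.

Lemma factor_dvd (d : 'I_n.+1) : 0 < e d -> 1 < d /\ d %| n.
Proof.
move=> ed_gt0; split; first by rewrite ltnNge; apply: contraL ed_gt0 => /e_trivial ->.
have : d %| \prod_(d' : 'I_n.+1) d' ^ e d' by rewrite (bigD1 d) //= dvdn_mulr // dvdn_exp.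
by rewrite e_prod.
Qed.

Lemma factor_prime (d : 'I_n.+1) : prime n -> d != ord_max -> e d = 0 :> nat.
Proof.
move=> pn dn; apply/eqP; rewrite -leqn0 leqNgt; apply: contra dn => /factor_dvd [d1 dd].
have d_n : d = n :> nat by apply/(prime_nt_dvdP pn) => //; rewrite neq_ltn d1 orbT.
exact/eqP/val_inj.
Qed.
End Factorizations.

Lemma pi_dec_prime n : prime n -> pi_dec n = 0.
Proof.
move=> pn; apply/eqP; rewrite cards_eq0; apply/eqP/setP => e; rewrite !inE.
apply/negbTE/and3P => -[/forallP e_triv /eqP e_prod].
have e_trivial (d : 'I_n.+1) : d <= 1 -> e d = ord0 by move=> ?; apply/eqP/(implyP (e_triv d)).
have e0 (d : 'I_n.+1) : d != ord_max -> e d = 0 :> nat := factor_prime e_trivial e_prod pn.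
have e_max : e ord_max = 1 :> nat.
  apply/eqP; rewrite -(eqn_exp2l _ _ (prime_gt1 pn)) expn1 -[X in _ == X]e_prod.
  by rewrite (bigD1 ord_max) //= big1 ?muln1 // => d /e0 ->.
by rewrite (bigD1 ord_max) //= big1 ?addn0 ?e_max // => d /e0.
Qed.

Lemma pow2_pow4_eq4 (a b : nat) : a < 5 -> b < 5 -> 2 ^ a * 4 ^ b = 4 -> 1 < a + b ->
  a = 2 /\ b = 0.
Proof. by move: a b => [|[|[|[|[|a]]]]] [|[|[|[|[|b]]]]]. Qed.

Lemma pi_dec4 : pi_dec 4 = 1.
Proof.
pose d2 : 'I_5 := inord 2.
have v2 : d2 = 2 :> nat by rewrite inordK.
have m2 : (ord_max : 'I_5) != d2 by rewrite -(inj_eq val_inj) /= v2.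
pose e0 : {ffun 'I_5 -> 'I_5} := [ffun d => if d == d2 then d2 else ord0].
apply/eqP/cards1P; exists e0; apply/setP => e; rewrite !inE.
apply/idP/eqP => [/and3P [/forallP e_triv /eqP e_prod e_sum]|->].
  have e_trivial (d : 'I_5) : d <= 1 -> e d = ord0 by move=> ?; apply/eqP/(implyP (e_triv d)).
  have e0_out (d : 'I_5) : d != d2 -> d != ord_max -> e d = 0 :> nat.
    move=> dn dm; apply/eqP; rewrite -leqn0 leqNgt; apply/negP => /(factor_dvd e_trivial e_prod).
    move: dn dm; rewrite -!(inj_eq val_inj) /= v2.
    by case: d => [[|[|[|[|[|?]]]]] ?] //= _ _ [].
  have [a2 b0] : e d2 = 2 :> nat /\ e ord_max = 0 :> nat.
    apply: pow2_pow4_eq4 => //.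
      rewrite -[RHS]e_prod (bigD1 d2) //= (bigD1 ord_max) //= big1 ?muln1 ?v2 //.
      by move=> d /andP [dn dm]; rewrite e0_out.
    move: e_sum; rewrite (bigD1 d2) //= (bigD1 ord_max) //= big1 ?addn0 //.
    by move=> d /andP [dn dm]; apply: e0_out.
  apply/ffunP => d; rewrite ffunE; apply: val_inj.
  case: (eqVneq d d2) => [->|dn] /=; first by rewrite a2 v2.
  by case: (eqVneq d ord_max) => [->|dm]; [rewrite b0 | apply: e0_out].
apply/and3P; split.
- apply/forallP => d; apply/implyP => hd; rewrite ffunE.
  by case: (eqVneq d d2) => // e2; move: hd; rewrite e2 v2.
- rewrite (bigD1 d2) //= big1 ?muln1 ?ffunE ?eqxx ?v2 //.
  by move=> d dn; rewrite ffunE (negbTE dn) expn0.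
- rewrite (bigD1 d2) //= big1 ?addn0 ?ffunE ?eqxx ?v2 //.
  by move=> d dn; rewrite ffunE (negbTE dn).
Qed.

(** * Ordinal products and the representatives *)

Section ComputableOrdinalProduct.
Variables (T1 T2 : finType) (L1 : RLops T1) (L2 : RLops T2).

Definition inj1_c (x : T1) : OPT T2 L1 :=
  if @insub_eq _ _ {x : T1 | x != rone L1} x is Some y then inl y else inr (rzero L2).

Lemma inj1_cE : inj1_c = inj1 L1 L2.
Proof. by apply: functional_extensionality => x; rewrite /inj1_c insub_eqE. Qed.

(* [ordinal_product] with [inj1] replaced by [inj1_c], by abstracting [inj1] in
   the unfolded definition. *)
Definition ordinal_product_c : RLops (OPT T2 L1) :=
  ltac:(let t := eval unfold ordinal_product, op_meet, op_join, op_mul, op_imp in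
          (ordinal_product L1 L2) in
        lazymatch eval pattern (inj1 L1 L2) in t with ?f _ => exact (f inj1_c) end).

Lemma ordinal_product_cE : ordinal_product_c = ordinal_product L1 L2.
Proof. by rewrite /ordinal_product_c inj1_cE. Qed.
End ComputableOrdinalProduct.

Section OrdinalProductOnOrdinals.
Variables (k m : nat) (L1 : RLops 'I_k.+1) (L2 : RLops 'I_m.+1).
Local Notation O := (OPT 'I_m.+1 L1).

(* [L1] occupies the indices [0..k] and [L2] the indices [k..k+m], the index [k]
   standing for [1_1 = 0_2]. *)
Definition oprod_to (u : O) : 'I_(k + m).+1 :=
  ord_of_nat (k + m) (match u with inl x => nat_of_ord (val x) | inr y => k + y end).

Definition oprod_from (i : 'I_(k + m).+1) : O :=
  if i < k then inj1_c L1 L2 (ord_of_nat k i) else inr (ord_of_nat m (i - k)).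

Hypothesis L1_top : rone L1 = ord_max.

Lemma inj1_inl (x : {x : 'I_k.+1 | x != rone L1}) : inj1 L1 L2 (val x) = inl x.
Proof. by rewrite /inj1 valK. Qed.

Lemma lt_of_neq_top (x : 'I_k.+1) : x != rone L1 -> x < k.
Proof. by rewrite L1_top -(inj_eq val_inj) => xk; rewrite ltn_neqAle -ltnS ltn_ord andbT. Qed.

Lemma oprod_toK : cancel oprod_to oprod_from.
Proof.
case=> [x|y]; rewrite /oprod_to /oprod_from inj1_cE.
  have xk := lt_of_neq_top (valP x).
  rewrite (ord_of_natK (ltnW (ltn_addr m xk))) xk -inj1_inl; congr inj1.
  by apply: val_inj; rewrite /= ord_of_natK.
have ky : k + y < (k + m).+1 by rewrite ltnS leq_add2l -ltnS.
rewrite (ord_of_natK ky) ltnNge leq_addr /= addKn.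
by congr inr; apply: val_inj; rewrite /= ord_of_natK.
Qed.

Lemma oprod_fromK : cancel oprod_from oprod_to.
Proof.
move=> i; rewrite /oprod_from inj1_cE; case: ltnP => ik; apply: val_inj.
  have i_top : ord_of_nat k i != rone L1.
    by rewrite L1_top -(inj_eq val_inj) /= ord_of_natK ?neq_ltn ?ik // ltnW.
  by rewrite /inj1 insubT /oprod_to /= !ord_of_natK // ltnW.
have ikm : i - k < m.+1 by rewrite ltnS leq_subLR -ltnS.
by rewrite /oprod_to /= (ord_of_natK ikm) subnKC // ord_of_natK.
Qed.

Definition oprod : RLops 'I_(k + m).+1 :=
  tabulate_ops (transport (ordinal_product_c L1 L2) oprod_from oprod_to).

Lemma iso_ordinal_product_oprod : iso_ops (ordinal_product L1 L2) oprod.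
Proof.
exists oprod_to; split; first exact: Bijective oprod_toK oprod_fromK.
apply/hom_opsP; rewrite /oprod tabulate_opsE ordinal_product_cE.
exact: hom_can oprod_fromK oprod_toK (transport_hom _ oprod_toK).
Qed.
End OrdinalProductOnOrdinals.

(* Truncated subtraction gives the Łukasiewicz product max(0, x + y - n). *)
Definition luk n : RLops 'I_n.+1 :=
  tabulate_ops (reconstruct (fun x y => x <= y) (fun x y => ord_of_nat n (x + y - n))).

(* The four-element Boolean algebra, whose atoms are 1 and 2. *)
Definition bool4 : RLops 'I_4 :=
  tabulate_ops (reconstruct (fun x y => [|| x == ord0, y == ord_max | x == y])
    (fun x y => if x == y then x else if x == ord_max then y else if y == ord_max then x else ord0)).

Definition BLreps n : seq (RLops 'I_n.+1) :=
  match n as n' return seq (RLops 'I_n'.+1) with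
  | 1 => [:: luk 1]
  | 2 => [:: luk 2; oprod (luk 1) (luk 1)]
  | 3 => [:: luk 3; bool4; oprod (luk 1) (luk 2); oprod (luk 2) (luk 1);
             oprod (luk 1) (oprod (luk 1) (luk 1))]
  | 4 => [:: luk 4; oprod (luk 1) (luk 3); oprod (luk 3) (luk 1); oprod (luk 2) (luk 2);
             oprod (luk 1) (oprod (luk 1) (luk 2)); oprod (luk 1) (oprod (luk 2) (luk 1));
             oprod (luk 2) (oprod (luk 1) (luk 1)); oprod (luk 1) (oprod (luk 1) (oprod (luk 1) (luk 1)));
             oprod (luk 1) bool4]
  | _ => [::]
  end.

Definition MVreps n : seq (RLops 'I_n.+1) :=
  match n as n' return seq (RLops 'I_n'.+1) with
  | 1 => [:: luk 1] | 2 => [:: luk 2] | 3 => [:: luk 3; bool4] | 4 => [:: luk 4]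
  | _ => [::]
  end.

Definition is_BL_enum n (t : RLops 'I_n) : bool := is_RL_on (ord_seq n) t && BL_ax_on (ord_seq n) t.
Definition is_MV_enum n (t : RLops 'I_n) : bool := is_RL_on (ord_seq n) t && MV_ax_on (ord_seq n) t.

Lemma is_BL_enumE n (t : RLops 'I_n) : is_BL t = is_BL_enum t.
Proof. exact: is_BL_onE (@mem_ord_seq n). Qed.

Lemma is_MV_enumE n (t : RLops 'I_n) : is_MV t = is_MV_enum t.
Proof. exact: is_MV_onE (@mem_ord_seq n). Qed.

Lemma reps_checked n : 0 < n <= 4 ->
  [&& exhaustive_check (BLreps n) (MVreps n),
      all (@is_BL_enum _) (BLreps n), pairwise (fun a b => ~~ iso_by_perm a b) (BLreps n),
      all (@is_MV_enum _) (MVreps n) & pairwise (fun a b => ~~ iso_by_perm a b) (MVreps n)].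
Proof.
case: n => [|[|[|[|[|n]]]]] n_range; try discriminate n_range; vm_compute; reflexivity.
Qed.

Section Counts.
Variable n : nat.
Hypothesis n_range : 0 < n <= 4.

Lemma BLreps_complete (t : RLops 'I_n.+1) :
  is_BL t -> exists2 r, List.In r (BLreps n) & iso_ops r t.
Proof.
have /and5P [check _ _ _ _] := reps_checked n_range; case/andP: n_range => n_gt0 _.
by move=> /[dup] /is_BLP [H _ _]; apply: (exhaustive_check_sound n_gt0 check H).1.
Qed.

Lemma MVreps_complete (t : RLops 'I_n.+1) :
  is_MV t -> exists2 r, List.In r (MVreps n) & iso_ops r t.
Proof.
have /and5P [check _ _ _ _] := reps_checked n_range; case/andP: n_range => n_gt0 _.
by move=> /[dup] /is_MVP [H _]; apply: (exhaustive_check_sound n_gt0 check H).2.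
Qed.

Lemma BLcountE : BLcount n.+1 = size (BLreps n).
Proof.
have /and5P [_ BL_reps pw _ _] := reps_checked n_range.
apply: num_classes_reps BLreps_complete => // t /(all_In BL_reps).
by rewrite is_BL_enumE.
Qed.

Lemma MVcountE : MVcount n.+1 = size (MVreps n).
Proof.
have /and5P [_ _ _ MV_reps pw] := reps_checked n_range.
apply: num_classes_reps MVreps_complete => // t /(all_In MV_reps).
by rewrite is_MV_enumE.
Qed.
End Counts.

Lemma iso_ops_ord n (T : finType) (A : RLops T) :
  #|T| = n -> exists t : RLops 'I_n, iso_ops t A.
Proof.
move=> <-; exists (transport A enum_val enum_rank).
exact: iso_ops_can enum_valK enum_rankK (transport_hom A (@enum_rankK _)).
Qed.

Definition ordinal_decomposable (T : finType) (A : RLops T) : Prop :=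
  exists (T1 T2 : finType) (L1 : RLops T1) (L2 : RLops T2),
    [/\ is_BL L1, is_BL L2, rzero L1 != rone L1, rzero L2 != rone L2 &
        iso_ops (ordinal_product L1 L2) A].

Lemma ordinal_decomposable_iso (T U : finType) (A : RLops T) (B : RLops U) :
  ordinal_decomposable A -> iso_ops A B -> ordinal_decomposable B.
Proof.
case=> T1 [T2 [L1 [L2 [BL1 BL2 nt1 nt2 iso_A]]]] iso_AB.
by exists T1, T2, L1, L2; split=> //; apply: iso_ops_trans iso_AB.
Qed.

Lemma oprod_decomposable k m (L1 : RLops 'I_k.+1) (L2 : RLops 'I_m.+1) :
  [&& rone L1 == ord_max, is_BL_enum L1, is_BL_enum L2, rzero L1 != rone L1 & rzero L2 != rone L2] ->
  ordinal_decomposable (oprod L1 L2).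
Proof.
case/and5P => /eqP L1_top BL1 BL2 nt1 nt2; exists _, _, L1, L2.
by rewrite !is_BL_enumE; split=> //; apply: iso_ordinal_product_oprod.
Qed.

Lemma BLreps_decomposable n (r : RLops 'I_n.+1) :
  List.In r (BLreps n) -> ~~ is_MV r -> ordinal_decomposable r.
Proof.
rewrite is_MV_enumE; case: n r => [|[|[|[|[|n]]]]] r // r_in.
all: repeat (case: r_in => [r_def|r_in]; [subst r; first
  [ by move=> /negP nMV; exfalso; apply: nMV; vm_compute
  | by move=> _; match goal with |- context [oprod ?L1 ?L2] =>
      apply: (oprod_decomposable (L1 := L1) (L2 := L2)); vm_compute end ] |]).
all: by case: r_in.
Qed.

Lemma BL_not_MV_decomposable (T : finType) (A : RLops T) :
  2 <= #|T| <= 5 -> is_BL A -> ~~ is_MV A -> ordinal_decomposable A.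
Proof.
move=> /andP [T_ge2 T_le5] BL_A nMV_A.
have [n T_n] : exists n, #|T| = n.+1 by exists #|T|.-1; rewrite prednK // ltnW.
have n_range : 0 < n <= 4 by move: T_ge2 T_le5; rewrite T_n !ltnS => ->.
have [t iso_tA] := iso_ops_ord A T_n.
have [_ BL_tA MV_tA] := iso_ops_axiomsE iso_tA.
have [r r_in iso_rt] := BLreps_complete n_range (etrans BL_tA BL_A).
have [_ _ MV_rt] := iso_ops_axiomsE iso_rt.
apply: ordinal_decomposable_iso (iso_ops_trans iso_rt iso_tA).
by apply: BLreps_decomposable r_in _; rewrite MV_rt MV_tA.
Qed.

Theorem theorem4p7 :
  (forall (T : finType) (A : RLops T),
      2 <= #|T| <= 5 -> is_BL A -> ~~ is_MV A ->
      exists (T1 T2 : finType) (L1 : RLops T1) (L2 : RLops T2),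
        [/\ is_BL L1, is_BL L2, rzero L1 != rone L1, rzero L2 != rone L2 &
            iso_ops (ordinal_product L1 L2) A])
  /\
  [/\ BLcount 2 = MVcount 2 /\ MVcount 2 = pi_dec 2 + 1,
      BLcount 3 = MVcount 3 + BLcount 2 /\
        MVcount 3 + BLcount 2 = pi_dec 3 + pi_dec 2 + 2,
      BLcount 4 = MVcount 4 + BLcount 3 + BLcount 2 /\
        MVcount 4 + BLcount 3 + BLcount 2 = pi_dec 4 + pi_dec 3 + 2 * pi_dec 2 + 4 &
      BLcount 5 = MVcount 5 + BLcount 4 + BLcount 3 + BLcount 2 /\
        MVcount 5 + BLcount 4 + BLcount 3 + BLcount 2
          = pi_dec 5 + pi_dec 4 + 2 * pi_dec 3 + 4 * pi_dec 2 + 8].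
Proof.
split; first exact: BL_not_MV_decomposable.
rewrite (BLcountE (n := 1)) // (BLcountE (n := 2)) // (BLcountE (n := 3)) //.
rewrite (BLcountE (n := 4)) // (MVcountE (n := 1)) // (MVcountE (n := 2)) //.
rewrite (MVcountE (n := 3)) // (MVcountE (n := 4)) // pi_dec4.
by rewrite !pi_dec_prime.
Qed.
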